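(* There exists $C>1$, depending only on $M$, such that for $l$ sufficiently large the following holds: if $E_j(\omega)$ is an eigenvalue of $H_\omega(\Lambda_l)$ with normalized eigenvector $\phi$, $u\in\mathbb{R}^l$ is defined by $u(i)=\phi(i)^2$, $j_0$ is an index with $u(j_0)=\max_ju(j)$, $\mathcal{J}=\{j_0-1,j_0,j_0+1\}$ and $\mathcal{K}=\{1,\dots,l\}\setminus\mathcal{J}$, then $\|u|_{\mathcal{K}}\|_1\in(1/C,1)$.
   Context: Let $(a_\omega(n))_{n\in\mathbb{Z}}$ be real numbers with $|a_\omega(n)|\in[1/M,M]$ for all $n$, for some $M>1$. $H_\omega(\Lambda_l)$ is the hopping operator $(H u)(n)=a_\omega(n+1)u(n+1)+a_\omega(n)u(n-1)$ restricted to $\ell^2(\{1,\dots,l\})$ with Dirichlet boundary conditions. $u|_{\mathcal{K}}$ is the restriction of $u$ to $\mathcal{K}$. *)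

From mathcomp Require Import all_boot all_order all_algebra.
From mathcomp Require Import reals.
Set Implicit Arguments. Unset Strict Implicit. Unset Printing Implicit Defensive.
Import Order.TTheory GRing.Theory Num.Theory.
Local Open Scope ring_scope.

(* Index i : 'I_l corresponds to the site n = i+1.
   (H u)(n) = a(n+1) u(n+1) + a(n) u(n-1), u(0) = u(l+1) = 0,
   so H(n, n+1) = a(n+1) and H(n, n-1) = a(n). *)
Definition hopping (R : ringType) (a : int -> R) (l : nat) : 'M[R]_l :=
  \matrix_(i < l, j < l)
    (if (j : nat) == i.+1 then a (Posz i.+2)
     else if (j : nat).+1 == i then a (Posz i.+1)
     else 0).

From mathcomp Require Import all_boot all_order all_algebra.
From mathcomp Require Import reals.
From mathcomp.algebra_tactics Require Import lra.
From mathcomp Require Import zify.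
Import Order.TTheory GRing.Theory Num.Theory.
Set Implicit Arguments. Unset Strict Implicit. Unset Printing Implicit Defensive.
Local Open Scope ring_scope.

(* The maximal entry bounds the eigenvalue, |E| <= 2M.  Solving the eigenvalue
   equation twice for the hopping term expresses phi(j0) through phi at
   distance two and three from j0, on a side where these sites exist (l >= 6
   guarantees one), with coefficients bounded in terms of M only; hence
   u(j0) <= D |u|_K|_1.  The at most three sites near j0 carry a mass between
   u(j0) and 3 u(j0), and the two masses add up to 1. *)

(* Entry of phi at site n + 1, extended by zero outside {1, ..., l}: the
   Dirichlet boundary values are built in. *)
Definition col_at (R : zmodType) (l : nat) (phi : 'cV[R]_l) (n : nat) : R :=
  if insub n is Some i then phi i 0 else 0.

Section ColAt.
Variables (R : zmodType) (l : nat) (phi : 'cV[R]_l).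

Lemma col_at_ord (i : 'I_l) : col_at phi i = phi i 0.
Proof. by rewrite /col_at valK. Qed.

Lemma col_at_lt n (nl : (n < l)%N) : col_at phi n = phi (Ordinal nl) 0.
Proof. exact: col_at_ord (Ordinal nl). Qed.

Lemma col_at_out n : (l <= n)%N -> col_at phi n = 0.
Proof. by move=> ln; rewrite /col_at insubF // ltnNge ln. Qed.

Lemma sum_col_at n : \sum_(j < l) (if (j : nat) == n then phi j 0 else 0) = col_at phi n.
Proof.
case: (ltnP n l) => [nl | ln]; last first.
  by rewrite col_at_out // big1 // => j _; case: eqP => // jn; move: (ltn_ord j); lia.
rewrite -[n]/(nat_of_ord (Ordinal nl)) col_at_ord (bigD1 (Ordinal nl)) //= eqxx.
by rewrite big1 ?addr0 // => j jn; case: eqP => // e; case/eqP: jn; exact: val_inj.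
Qed.

End ColAt.

Lemma norm_col_at_le_max (R : realDomainType) (l : nat) (phi : 'cV[R]_l) (j0 : 'I_l) :
  (forall j : 'I_l, phi j 0 ^+ 2 <= phi j0 0 ^+ 2) ->
  forall n, `|col_at phi n| <= `|col_at phi j0|.
Proof.
move=> phi_le n; case: (ltnP n l) => [nl | ln]; last by rewrite col_at_out ?normr0.
by rewrite col_at_lt col_at_ord -ler_sqr ?nnegrE // !real_normK ?num_real.
Qed.

Definition far (l : nat) (j0 i : 'I_l) : bool := ((i : nat).+1 < j0)%N || ((j0 : nat).+1 < i)%N.

Lemma card_near_le3 (l : nat) (j0 : 'I_l) : (#|[pred i | ~~ far j0 i]| <= 3)%N.
Proof.
rewrite cardE -(size_map val).
apply: (@leq_trans (size [:: (j0 : nat).-1; (j0 : nat); (j0 : nat).+1])); last by [].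
apply: uniq_leq_size; first by rewrite map_inj_uniq ?enum_uniq //; exact: val_inj.
move=> k /mapP[i]; rewrite mem_enum inE /far negb_or -!leqNgt => /andP[? ?] ->.
by rewrite !inE /=; lia.
Qed.

Lemma le_sum_pair (R : numDomainType) (I : finType) (P : pred I) (F : I -> R) i j :
  (forall k, 0 <= F k) -> P i -> P j -> i != j -> F i + F j <= \sum_(k | P k) F k.
Proof.
move=> F_ge0 Pi Pj ij; rewrite (bigD1 i) //= (bigD1 j) /=; last by rewrite Pj eq_sym.
by rewrite addrA lerDl sumr_ge0.
Qed.

Lemma near_mass_le (R : numDomainType) (l : nat) (u : 'I_l -> R) (j0 : 'I_l) :
  0 <= u j0 -> (forall j, u j <= u j0) -> \sum_(i | ~~ far j0 i) u i <= 3 * u j0.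
Proof.
move=> u_ge0 u_le; apply: le_trans (ler_sum _ (fun i _ => u_le i)) _.
have := sumr_const [pred i | ~~ far j0 i] (u j0); rewrite /= => ->.
rewrite mulrC mulr_natr; apply: (ler_wpMn2l u_ge0); exact: card_near_le3.
Qed.

Lemma near_mass_ge (R : numDomainType) (l : nat) (u : 'I_l -> R) (j0 : 'I_l) :
  (forall j, 0 <= u j) -> u j0 <= \sum_(i | ~~ far j0 i) u i.
Proof.
move=> u_ge0; rewrite (bigD1 j0) /=; last by rewrite /far; lia.
by rewrite lerDl sumr_ge0.
Qed.

Section HoppingEigenvector.
Variables (R : nzRingType) (l : nat) (a : int -> R) (E : R) (phi : 'cV[R]_l).
Hypothesis eigen : hopping a l *m phi = E *: phi.
Local Notation f := (col_at phi).

Lemma hopping_eigen_row n : (n < l)%N ->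
  E * f n = a n.+2%:Z * f n.+1 + (if n is k.+1 then a n.+1%:Z * f k else 0).
Proof.
move=> nl; have := congr1 (fun A : 'cV_l => A (Ordinal nl) 0) eigen.
rewrite !mxE -[n]/(nat_of_ord (Ordinal nl)) col_at_ord /= => <-.
have entry j : hopping a l (Ordinal nl) j * phi j 0 =
    a n.+2%:Z * (if (j : nat) == n.+1 then phi j 0 else 0) +
    (if (j : nat).+1 == n then a n.+1%:Z * phi j 0 else 0).
  by rewrite mxE /=; do 2 case: eqP => ? /=; rewrite ?mulr0 ?mul0r ?addr0 ?add0r //; lia.
rewrite (eq_bigr _ (fun j _ => entry j)) big_split /= -mulr_sumr sum_col_at.
congr (_ + _); case: n nl {entry} => [|k] _; first by rewrite big1.
by rewrite -sum_col_at mulr_sumr; apply: eq_bigr => j _; rewrite eqSS; case: eqP; rewrite ?mulr0.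
Qed.

Lemma hopping_eigen_row_succ n : (n.+1 < l)%N ->
  E * f n.+1 = a n.+3%:Z * f n.+2 + a n.+2%:Z * f n.
Proof. exact: hopping_eigen_row. Qed.

End HoppingEigenvector.

(* [4 M^4 + M^2] bounds the coefficients of two hopping steps; the factor 2
   comes from [(p + q)^2 <= 2 (p^2 + q^2)]. *)
Definition two_step_const (R : pzRingType) (M : R) : R := 2 * (4 * M ^+ 4 + M ^+ 2) ^+ 2.

Section HoppingSteps.
Variables (R : realFieldType) (M E : R) (a : int -> R).
Hypotheses (M_gt0 : 0 < M) (a_bounds : forall n, M^-1 <= `|a n| <= M).
Hypothesis normE_le : `|E| <= 2 * M.

Lemma norm_le_hopping_step i j y z w :
  a i * y = E * z - a j * w -> `|y| <= M ^+ 2 * (2 * `|z| + `|w|).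
Proof.
move=> rec; have /andP[ai_ge _] := a_bounds i; have /andP[_ aj_le] := a_bounds j.
have ay_le : `|a i * y| <= 2 * M * `|z| + M * `|w|.
  rewrite rec; apply: le_trans (ler_normB _ _) _; rewrite !normrM.
  by apply: lerD; apply: ler_wpM2r.
have y_le : `|y| <= M * `|a i * y|.
  rewrite normrM mulrA -[X in X <= _]mul1r ler_wpM2r //.
  by rewrite -(mulfV (lt0r_neq0 M_gt0)) ler_wpM2l // ltW.
apply: le_trans y_le _; rewrite expr2 -mulrA; apply: ler_wpM2l; first exact: ltW.
by rewrite mulrDr !mulrA [M * 2]mulrC.
Qed.

Lemma sqr_le_hopping_two_steps i j k m x y z w :
  a i * x = E * y - a j * z -> a k * y = E * z - a m * w ->
  x ^+ 2 <= two_step_const M * (z ^+ 2 + w ^+ 2).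
Proof.
move=> /norm_le_hopping_step x_le /norm_le_hopping_step y_le.
set K := 4 * M ^+ 4 + M ^+ 2.
have M2_ge0 : 0 <= M ^+ 2 by rewrite exprn_ge0 ?ltW.
have x_lin : `|x| <= K * (`|z| + `|w|).
  apply: (le_trans x_le); rewrite /K -[M ^+ 4]/(M ^+ (2 + 2)) exprD.
  have := ler_wpM2l M2_ge0 y_le.
  have := mulr_ge0 (mulr_ge0 M2_ge0 M2_ge0) (normr_ge0 w).
  have := mulr_ge0 M2_ge0 (normr_ge0 w); nra.
have K_ge0 : 0 <= K by rewrite /K; nra.
have x_sq : `|x| ^+ 2 <= (K * (`|z| + `|w|)) ^+ 2.
  by rewrite !expr2; apply: ler_pM; rewrite ?normr_ge0 ?mulr_ge0 ?addr_ge0.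
rewrite /two_step_const -/K -(real_normK (num_real x)).
rewrite -(real_normK (num_real z)) -(real_normK (num_real w)).
have := sqr_ge0 (K * (`|z| - `|w|)); nra.
Qed.

End HoppingSteps.

Section HoppingDecay.
Variables (R : realFieldType) (M : R) (l : nat) (a : int -> R) (E : R) (phi : 'cV[R]_l).
Hypotheses (M_gt0 : 0 < M) (a_bounds : forall n, M^-1 <= `|a n| <= M).
Hypothesis eigen : hopping a l *m phi = E *: phi.
Local Notation f := (col_at phi).

Lemma norm_eigenvalue_le (j0 : 'I_l) :
  (forall n, `|f n| <= `|f j0|) -> f j0 != 0 -> `|E| <= 2 * M.
Proof.
move=> f_le fj0_neq0; have fj0_gt0 : 0 < `|f j0| by rewrite normr_gt0.
rewrite -(ler_pM2r fj0_gt0) -normrM (hopping_eigen_row eigen (ltn_ord j0)).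
have term_le i n : `|a i * f n| <= M * `|f j0|.
  by rewrite normrM; apply: ler_pM => //; case/andP: (a_bounds i).
apply: le_trans (ler_normD _ _) _.
have left_le n : `|if n is k.+1 then a n.+1%:Z * f k else 0| <= M * `|f j0|.
  by case: n => [|k]; [rewrite normr0 mulr_ge0 ?ltW // ?normr_ge0 | exact: term_le].
by have := term_le (j0.+2)%:Z j0.+1; have := left_le j0; lra.
Qed.

Hypothesis normE_le : `|E| <= 2 * M.

Lemma sqr_le_right_tail j : (j.+3 < l)%N ->
  f j ^+ 2 <= two_step_const M * (f j.+2 ^+ 2 + f j.+3 ^+ 2).
Proof.
move=> jl; have row1 := hopping_eigen_row_succ eigen (ltnW (ltnW jl)).
have row2 := hopping_eigen_row_succ eigen (ltnW jl).
apply: (sqr_le_hopping_two_steps M_gt0 a_bounds normE_le (i := j.+2%:Z) (j := j.+3%:Z)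
  (k := j.+3%:Z) (m := j.+4%:Z) (y := f j.+1)); lra.
Qed.

Lemma sqr_le_left_tail j : (j.+3 < l)%N ->
  f j.+3 ^+ 2 <= two_step_const M * (f j.+1 ^+ 2 + f j ^+ 2).
Proof.
move=> jl; have row1 := hopping_eigen_row_succ eigen (ltnW jl).
have row0 := hopping_eigen_row_succ eigen (ltnW (ltnW jl)).
apply: (sqr_le_hopping_two_steps M_gt0 a_bounds normE_le (i := j.+4%:Z) (j := j.+3%:Z)
  (k := j.+3%:Z) (m := j.+2%:Z) (y := f j.+2)); lra.
Qed.

Lemma sqr_le_far_mass (j0 : 'I_l) : (6 <= l)%N ->
  phi j0 0 ^+ 2 <= two_step_const M * \sum_(i < l | far j0 i) phi i 0 ^+ 2.
Proof.
have D_ge0 : 0 <= two_step_const M by rewrite mulr_ge0 ?sqr_ge0.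
move=> l6; rewrite -col_at_ord; case: (ltnP j0.+3 l) => [j0_right | j0_left].
- have j2 : (j0.+2 < l)%N by lia.
  apply: le_trans (sqr_le_right_tail j0_right) _.
  rewrite (col_at_lt _ j0_right) (col_at_lt _ j2) ler_wpM2l //.
  apply: (@le_sum_pair _ _ (far j0) (fun i => phi i 0 ^+ 2));
    [by move=> k; apply: sqr_ge0 | | | by apply/eqP => -[]; lia]; rewrite /far /=; lia.
- have [m j0E] : exists m, j0 = m.+3 :> nat by exists (j0 - 3)%N; lia.
  have m3 : (m.+3 < l)%N by rewrite -j0E.
  have m1 : (m.+1 < l)%N by lia.
  have m0 : (m < l)%N by lia.
  rewrite j0E; apply: le_trans (sqr_le_left_tail m3) _.
  rewrite (col_at_lt _ m1) (col_at_lt _ m0) ler_wpM2l //.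
  apply: (@le_sum_pair _ _ (far j0) (fun i => phi i 0 ^+ 2));
    [by move=> k; apply: sqr_ge0 | | | by apply/eqP => -[]; lia]; rewrite /far /= j0E; lia.
Qed.

End HoppingDecay.

Lemma far_fraction_bounds (R : realFieldType) (D x s t : R) :
  0 < D -> 0 < x -> x <= D * s -> x <= t -> t <= 3 * x -> s + t = 1 ->
  (2 * (1 + 3 * D))^-1 < s < 1.
Proof.
move=> D_gt0 x_gt0 x_le t_ge t_le st1; apply/andP; split; last lra.
have s_gt0 : 0 < s by rewrite -(pmulr_rgt0 _ D_gt0); lra.
rewrite -[X in X < _]mulr1 ltr_pdivrMl; nra.
Qed.

Theorem mainTheorem14 (R : realType) (M : R) :
  1 < M ->
  exists C : R, 1 < C /\
  exists L : nat, forall l : nat, (L <= l)%N ->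
  forall a : int -> R, (forall n : int, M^-1 <= `|a n| <= M) ->
  forall (E : R) (phi : 'cV[R]_l),
    hopping a l *m phi = E *: phi ->
    \sum_(i < l) phi i 0 ^+ 2 = 1 ->
    let u := fun i : 'I_l => phi i 0 ^+ 2 in
    forall j0 : 'I_l, (forall j : 'I_l, u j <= u j0) ->
    let normK := \sum_(i < l | ((i : nat).+1 < j0)%N || ((j0 : nat).+1 < i)%N) `|u i| in
    C^-1 < normK < 1.
Proof.
move=> M_gt1; have M_gt0 : 0 < M by lra.
have D_gt0 : 0 < two_step_const M by rewrite mulr_gt0 ?exprn_gt0 ?addr_gt0 ?mulr_gt0 ?exprn_gt0.
exists (2 * (1 + 3 * two_step_const M)); split; first lra.
exists 6%N => l l_ge6 a a_bounds E phi eigen mass1 u j0 u_le_max; cbv zeta.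
have u_gt0 : 0 < u j0.
  rewrite lt0r sqr_ge0 andbT; apply/eqP => u0.
  suff : \sum_(i < l) phi i 0 ^+ 2 <= 0 by rewrite mass1; lra.
  by apply: sumr_le0 => i _; rewrite -u0; exact: u_le_max.
have normE_le : `|E| <= 2 * M.
  apply: (norm_eigenvalue_le M_gt0 a_bounds eigen (norm_col_at_le_max u_le_max)).
  by rewrite col_at_ord -sqrf_eq0 gt_eqF.
have normKE : \sum_(i < l | far j0 i) `|u i| = \sum_(i < l | far j0 i) u i.
  by apply: eq_bigr => i _; rewrite ger0_norm ?sqr_ge0.
apply: (far_fraction_bounds D_gt0 u_gt0).
- by rewrite normKE; exact: sqr_le_far_mass M_gt0 a_bounds eigen normE_le j0 l_ge6.
- by apply: near_mass_ge => j; exact: sqr_ge0.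
- by apply: near_mass_le (sqr_ge0 _) u_le_max.
- by rewrite normKE -mass1 [RHS](bigID (far j0)).
Qed.
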